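(* In the discrete torus model with frame group $\mathbb{Z}_4$ and calculus $\{\bar1,\bar3\}$ (context), assume the reality condition $\overline{\Theta_a}=R_a\Theta_a$ ($a=1,2$). Then a torsion-free cotorsion-free connection (parametrised by $a,b$) satisfies the reality condition $A_{\bar1}^*=A_{\bar3}$ if and only if $\bar a=R_2a$ and $\bar b=R_1b$. Under these conditions the regularity condition $s_1\bar\partial^2a-s_2\bar\partial^1b=0$ is invariant under complex conjugation, and the function \[R=\partial^1b+\partial^2a+s_1R_1b+s_2R_2a-2bR_1b-2aR_2a\] satisfies $\bar R=R+\bar\partial^1\big(\partial^1b+s_1R_1b\big)+\bar\partial^2\big(\partial^2a+s_2R_2a\big)$; in particular $\sum_{x\in\Sigma}R(x)$ is real.
   Context: Discrete torus model: $\Sigma=\mathbb{Z}_2\times\mathbb{Z}_2$, $x\to y$ iff $y-x\in\{(1,0),(0,1)\}$; diagonal zweibein $e_{1,x,x+(1,0)}=\Theta_1(x)^{-1}$, $e_{2,x,x+(0,1)}=\Theta_2(x)^{-1}$, $\Theta_a$ nowhere-vanishing with $\Theta_1R_1\Theta_2=\Theta_2R_2\Theta_1$; $R_1f(x)=f(x+(1,0))$, $R_2f(x)=f(x+(0,1))$, $\bar\partial^a=R_a-\mathrm{id}$, $\partial^a=\Theta_a\bar\partial^a$, $s_1=\bar\partial^2\Theta_1$, $s_2=\bar\partial^1\Theta_2$; $e_af=R_a(f)e_a$, $\mathrm{d}f=\sum_a(\partial^af)e_a$. Frame group $\mathbb{Z}_4$ acting by quarter rotations with calculus $\{\bar1,\bar3\}$;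 the torsion-free cotorsion-free connections are $A_{\bar1}=(-\alpha-\frac{s_1}{2})e_1+(\beta-\frac{s_2}{2})e_2$, $A_{\bar3}=(\beta-\frac{s_1}{2})e_1+(\alpha-\frac{s_2}{2})e_2$ with $a=\alpha+\beta$, $b=\beta-\alpha$ satisfying $(R_1+R_2)a=(R_1+R_2)b=0$. The $*$-structure: complex conjugation $f\mapsto\bar f$ on functions, extended antilinearly and antimultiplicatively to forms with $e_a^*=e_a$, so $(fe_a)^*=e_a\bar f=R_a(\bar f)e_a$. The reality condition $\theta^*=\theta$ for $\theta=\Theta_1e_1+\Theta_2e_2$ is $\overline{\Theta_a}=R_a\Theta_a$; the reality condition on spin connections is $A_i^*=A_{i^{-1}}$, here $A_{\bar1}^*=A_{\bar3}$. *)

From HB Require Import structures.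
From mathcomp Require Import all_boot all_order all_algebra.
Set Implicit Arguments. Unset Strict Implicit. Unset Printing Implicit Defensive.
Import Order.TTheory GRing.Theory Num.Theory.
Local Open Scope ring_scope.

(* Discrete torus Sigma = Z_2 x Z_2; functions Sigma -> C, with C any
   numClosedFieldType (e.g. complex numbers), conjugation = Num.conj (x^* ). *)
Definition Sigma : finType := ('Z_2 * 'Z_2)%type.

Section Torus.
Variable C : numClosedFieldType.
Definition fn := Sigma -> C.

Definition R1 (f : fn) : fn := fun x => f (x.1 + 1, x.2).
Definition R2 (f : fn) : fn := fun x => f (x.1, x.2 + 1).
Definition fconj (f : fn) : fn := fun x => (f x)^*.
Definition dbar1 (f : fn) : fn := fun x => R1 f x - f x.
Definition dbar2 (f : fn) : fn := fun x => R2 f x - f x.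
Definition d1 (Th1 f : fn) : fn := fun x => Th1 x * dbar1 f x.
Definition d2 (Th2 f : fn) : fn := fun x => Th2 x * dbar2 f x.
Definition s1 (Th1 : fn) : fn := dbar2 Th1.
Definition s2 (Th2 : fn) : fn := dbar1 Th2.

(* a 1-form f1 e1 + f2 e2 (coefficients on the left) as the pair (f1, f2) *)
Definition form := (fn * fn)%type.
(* (f e_a)^* = e_a conj f = R_a(conj f) e_a *)
Definition form_star (A : form) : form := (R1 (fconj A.1), R2 (fconj A.2)).

(* alpha, beta from a = alpha + beta, b = beta - alpha *)
Definition alpha (a b : fn) : fn := fun x => (a x - b x) / 2%:R.
Definition beta (a b : fn) : fn := fun x => (a x + b x) / 2%:R.

Definition conn_A1 (Th1 Th2 a b : fn) : form :=
  (fun x => - alpha a b x - s1 Th1 x / 2%:R,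
   fun x => beta a b x - s2 Th2 x / 2%:R).
Definition conn_A3 (Th1 Th2 a b : fn) : form :=
  (fun x => beta a b x - s1 Th1 x / 2%:R,
   fun x => alpha a b x - s2 Th2 x / 2%:R).

Definition regularity (Th1 Th2 a b : fn) : fn :=
  fun x => s1 Th1 x * dbar2 a x - s2 Th2 x * dbar1 b x.

Definition Rfun (Th1 Th2 a b : fn) : fn :=
  fun x => d1 Th1 b x + d2 Th2 a x + s1 Th1 x * R1 b x + s2 Th2 x * R2 a x
           - 2%:R * b x * R1 b x - 2%:R * a x * R2 a x.
End Torus.

From HB Require Import structures.
From mathcomp Require Import all_boot all_order all_algebra.
From mathcomp Require Import ring.
From Stdlib Require Import FunctionalExtensionality.
Import Order.TTheory GRing.Theory Num.Theory.
Local Open Scope ring_scope.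

(* Complex conjugation commutes with the translations R_a, so with the
   reality conditions it acts on a function of the torus as a translation;
   together with R_a^2 = id and (R_1 + R_2) a = (R_1 + R_2) b = 0 every
   identity reduces to a polynomial identity in the values of Θ_a, a, b at
   the four points of Σ.  The sum of R is real because the correction terms
   are ∂̄-derivatives, whose sums over Σ vanish. *)

Lemma Z2_add11 (z : 'Z_2) : z + 1 + 1 = z.
Proof. by rewrite -addrA (_ : 1 + 1 = 0) ?addr0 //; apply/val_inj. Qed.

Lemma pair_eq_funext (T U : Type) (f1 f2 g1 g2 : T -> U) :
  (f1, f2) = (g1, g2) <-> (forall x, f1 x = g1 x) /\ (forall x, f2 x = g2 x).
Proof.
split=> [[-> ->] // | [e1 e2]].
by rewrite (functional_extensionality _ _ e1) (functional_extensionality _ _ e2).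
Qed.

Section Torus.
Variable C : numClosedFieldType.
Implicit Types f : fn C.

Lemma sum_R1 f : \sum_x R1 f x = \sum_x f x.
Proof.
have shift_inj : injective (fun x : Sigma => (x.1 + 1, x.2)).
  by apply: (can_inj (g := fun x : Sigma => (x.1 + 1, x.2))) => -[i j] /=; rewrite Z2_add11.
by rewrite [RHS](reindex_inj shift_inj).
Qed.

Lemma sum_R2 f : \sum_x R2 f x = \sum_x f x.
Proof.
have shift_inj : injective (fun x : Sigma => (x.1, x.2 + 1)).
  by apply: (can_inj (g := fun x : Sigma => (x.1, x.2 + 1))) => -[i j] /=; rewrite Z2_add11.
by rewrite [RHS](reindex_inj shift_inj).
Qed.

Lemma sum_dbar1 f : \sum_x dbar1 f x = 0.
Proof. by rewrite sumrB sum_R1 subrr. Qed.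

Lemma sum_dbar2 f : \sum_x dbar2 f x = 0.
Proof. by rewrite sumrB sum_R2 subrr. Qed.

Lemma R1_eq_oppR2 {f} (f_tf : forall x, R1 f x + R2 f x = 0) i j :
  f (i + 1, j) = - f (i, j + 1).
Proof. by apply/eqP; rewrite -addr_eq0; apply/eqP; exact: f_tf (i, j). Qed.

Lemma R2_eq_oppR1 {f} (f_tf : forall x, R1 f x + R2 f x = 0) i j :
  f (i, j + 1) = - f (i + 1, j).
Proof. by rewrite R1_eq_oppR2 // opprK. Qed.

Lemma conjCD (x y : C) : (x + y)^* = x^* + y^*. Proof. exact: rmorphD. Qed.
Lemma conjCB (x y : C) : (x - y)^* = x^* - y^*. Proof. exact: rmorphB. Qed.
Lemma conjCN (x : C) : (- x)^* = - x^*. Proof. exact: rmorphN. Qed.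
Lemma conjCM (x y : C) : (x * y)^* = x^* * y^*. Proof. exact: rmorphM. Qed.
Lemma conjCV (x : C) : (x^-1)^* = (x^*)^-1. Proof. exact: fmorphV. Qed.
Lemma conjC_sum (I : finType) (F : I -> C) : (\sum_i F i)^* = \sum_i (F i)^*.
Proof. exact: rmorph_sum. Qed.

Let conjE := (conjC_nat, conjCD, conjCB, conjCN, conjCM, conjCV).

Section Reality.
Variables Th1 Th2 a b : fn C.
Hypothesis Th1_real : forall x, (Th1 x)^* = R1 Th1 x.
Hypothesis Th2_real : forall x, (Th2 x)^* = R2 Th2 x.
Hypothesis a_tf : forall x, R1 a x + R2 a x = 0.
Hypothesis b_tf : forall x, R1 b x + R2 b x = 0.

Definition ab_real : Prop :=
  (forall x, (a x)^* = R2 a x) /\ (forall x, (b x)^* = R1 b x).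

Lemma R1_conj_s1 x : R1 (fconj (s1 Th1)) x = s1 Th1 x.
Proof.
by case: x => i j; rewrite /R1 /fconj /s1 /dbar2 /R2 /= !conjE !Th1_real /R1 /= Z2_add11.
Qed.

Lemma R2_conj_s2 x : R2 (fconj (s2 Th2)) x = s2 Th2 x.
Proof.
by case: x => i j; rewrite /R2 /fconj /s2 /dbar1 /R1 /= !conjE !Th2_real /R2 /= Z2_add11.
Qed.

Lemma star_conn_A1E :
  form_star (conn_A1 Th1 Th2 a b) = conn_A3 Th1 Th2 a b <->
  (forall x, R1 (fconj (alpha a b)) x = - beta a b x) /\
  (forall x, R2 (fconj (beta a b)) x = alpha a b x).
Proof.
rewrite pair_eq_funext.
have star1 x : R1 (fconj (conn_A1 Th1 Th2 a b).1) x =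
               - R1 (fconj (alpha a b)) x - s1 Th1 x / 2%:R.
  by rewrite -R1_conj_s1 /R1 /fconj /= !conjE.
have star2 x : R2 (fconj (conn_A1 Th1 Th2 a b).2) x =
               R2 (fconj (beta a b)) x - s2 Th2 x / 2%:R.
  by rewrite -R2_conj_s2 /R2 /fconj /= !conjE.
split=> -[e1 e2]; split=> x.
- by move: (e1 x); rewrite star1 /= => /addIr <-; rewrite opprK.
- by move: (e2 x); rewrite star2 /= => /addIr.
- by rewrite star1 e1 opprK.
- by rewrite star2 e2.
Qed.

Lemma alpha_beta_realE :
  (forall x, R1 (fconj (alpha a b)) x = - beta a b x) /\
  (forall x, R2 (fconj (beta a b)) x = alpha a b x) <-> ab_real.
Proof.
have two_neq0 : (2%:R : C) != 0 by rewrite pnatr_eq0.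
split=> [[e_alpha e_beta] | [e_a e_b]].
- have conj_alpha i j : (alpha a b (i, j))^* = - beta a b (i + 1, j).
    by have := e_alpha (i + 1, j); rewrite /R1 /fconj /= Z2_add11.
  have conj_beta i j : (beta a b (i, j))^* = alpha a b (i, j + 1).
    by have := e_beta (i, j + 1); rewrite /R2 /fconj /= Z2_add11.
  have a_sum x : a x = alpha a b x + beta a b x by rewrite /alpha /beta; field.
  have b_diff x : b x = beta a b x - alpha a b x by rewrite /alpha /beta; field.
  split=> -[i j]; rewrite /R1 /R2 /=.
  + rewrite (a_sum (i, j)) conjCD conj_alpha conj_beta /alpha /beta.
    by rewrite (R1_eq_oppR2 a_tf) (R2_eq_oppR1 b_tf); field.
  + rewrite (b_diff (i, j)) conjCB conj_alpha conj_beta /alpha /beta.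
    by rewrite (R1_eq_oppR2 a_tf) (R2_eq_oppR1 b_tf); field.
- split=> -[i j]; rewrite /R1 /R2 /fconj /alpha /beta /= !conjE e_a e_b /R1 /R2 /=.
  all: by rewrite ?Z2_add11 ?(R1_eq_oppR2 a_tf) ?(R2_eq_oppR1 b_tf) ?Z2_add11; field.
Qed.

Lemma conj_regularity : ab_real ->
  forall x, (regularity Th1 Th2 a b x)^* = - R1 (R2 (regularity Th1 Th2 a b)) x.
Proof.
case=> e_a e_b [i j].
rewrite /regularity /s1 /s2 /dbar1 /dbar2 /R1 /R2 /= !conjE.
rewrite !e_a !e_b !Th1_real !Th2_real /R1 /R2 /= !Z2_add11.
by rewrite ?(R1_eq_oppR2 a_tf) ?(R2_eq_oppR1 b_tf) ?Z2_add11; ring.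
Qed.

Lemma conj_Rfun : ab_real ->
  forall x, (Rfun Th1 Th2 a b x)^* =
    Rfun Th1 Th2 a b x
    + dbar1 (fun y => d1 Th1 b y + s1 Th1 y * R1 b y) x
    + dbar2 (fun y => d2 Th2 a y + s2 Th2 y * R2 a y) x.
Proof.
case=> e_a e_b [i j].
rewrite /Rfun /d1 /d2 /s1 /s2 /dbar1 /dbar2 /R1 /R2 /= !conjE.
rewrite !e_a !e_b !Th1_real !Th2_real /R1 /R2 /= !Z2_add11.
by rewrite ?(R1_eq_oppR2 a_tf) ?(R2_eq_oppR1 b_tf) ?Z2_add11; ring.
Qed.

Lemma sum_Rfun_real : ab_real -> (\sum_x Rfun Th1 Th2 a b x) \is Num.real.
Proof.
move=> ab_re; apply/CrealP; rewrite conjC_sum.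
under eq_bigr do rewrite conj_Rfun //.
by rewrite 2!big_split /= sum_dbar1 sum_dbar2 !addr0.
Qed.

End Reality.
End Torus.

Theorem proposition5p1 (C : numClosedFieldType) (Th1 Th2 a b : fn C) :
  (forall x, Th1 x != 0) -> (forall x, Th2 x != 0) ->
  (forall x, Th1 x * R1 Th2 x = Th2 x * R2 Th1 x) ->
  (forall x, (Th1 x)^* = R1 Th1 x) -> (forall x, (Th2 x)^* = R2 Th2 x) ->
  (forall x, R1 a x + R2 a x = 0) -> (forall x, R1 b x + R2 b x = 0) ->
  [/\ form_star (conn_A1 Th1 Th2 a b) = conn_A3 Th1 Th2 a b <->
        ((forall x, (a x)^* = R2 a x) /\ (forall x, (b x)^* = R1 b x)),
      ((forall x, (a x)^* = R2 a x) /\ (forall x, (b x)^* = R1 b x)) ->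
        forall x, (regularity Th1 Th2 a b x)^* =
                  - R1 (R2 (regularity Th1 Th2 a b)) x,
      ((forall x, (a x)^* = R2 a x) /\ (forall x, (b x)^* = R1 b x)) ->
        forall x, (Rfun Th1 Th2 a b x)^* =
          Rfun Th1 Th2 a b x
          + dbar1 (fun y => d1 Th1 b y + s1 Th1 y * R1 b y) x
          + dbar2 (fun y => d2 Th2 a y + s2 Th2 y * R2 a y) x
    & ((forall x, (a x)^* = R2 a x) /\ (forall x, (b x)^* = R1 b x)) ->
        (\sum_(x : Sigma) Rfun Th1 Th2 a b x) \is Num.real].
Proof.
move=> _ _ _ Th1_real Th2_real a_tf b_tf; split.
- by rewrite star_conn_A1E // alpha_beta_realE.
- exact: conj_regularity.
- exact: conj_Rfun.
- exact: sum_Rfun_real.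
Qed.
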